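(* Let $R$ be a principal ideal domain and $a\in R$ with $Ra\neq 0$. Then the left ideal $Ra$ is extremely prime if and only if $a$ is irreducible and invariant.
   Context: A principal ideal domain (PID) is a (not necessarily commutative) domain in which every left ideal and every right ideal is principal. A left ideal $\mathfrak{p}$ is extremely prime if $\mathfrak{p}\neq R$ and for $a,b\in R$, $ab\in\mathfrak{p}$ implies $a\in\mathfrak{p}$ or $b\in\mathfrak{p}$. A non-unit $a$ is irreducible if $a=bc$ implies $b$ or $c$ is a unit. A nonzero $a$ is invariant if $Ra=aR$. *)

From mathcomp Require Import all_boot all_algebra.
Set Implicit Arguments. Unset Strict Implicit. Unset Printing Implicit Defensive.
Import GRing.Theory.
Local Open Scope ring_scope.

Section Defs.
Variable R : nzRingType.

Definition is_unit (a : R) : Prop := exists b : R, a * b = 1 /\ b * a = 1.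

Definition is_domain : Prop := forall x y : R, x * y = 0 -> x = 0 \/ y = 0.

Definition left_ideal (I : R -> Prop) : Prop :=
  [/\ I 0, (forall x y, I x -> I y -> I (x + y)) & (forall r x, I x -> I (r * x))].

Definition right_ideal (I : R -> Prop) : Prop :=
  [/\ I 0, (forall x y, I x -> I y -> I (x + y)) & (forall r x, I x -> I (x * r))].

Definition lprincipal (a : R) : R -> Prop := fun x => exists r, x = r * a.
Definition rprincipal (a : R) : R -> Prop := fun x => exists r, x = a * r.

Definition PID : Prop :=
  [/\ is_domain,
      (forall I, left_ideal I -> exists a, forall x, I x <-> lprincipal a x)
    & (forall I, right_ideal I -> exists a, forall x, I x <-> rprincipal a x)].

Definition extremely_prime (p : R -> Prop) : Prop :=
  [/\ left_ideal p, (exists x, ~ p x)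
    & (forall a b, p (a * b) -> p a \/ p b)].

Definition irreducible_elt (a : R) : Prop :=
  ~ is_unit a /\ (forall b c, a = b * c -> is_unit b \/ is_unit c).

Definition invariant_elt (a : R) : Prop :=
  a <> 0 /\ (forall x, lprincipal a x <-> rprincipal a x).

End Defs.

From mathcomp Require Import all_boot all_algebra.
From Stdlib Require Import ClassicalEpsilon.
Local Open Scope ring_scope.
Import GRing.Theory.
Set Implicit Arguments. Unset Strict Implicit.

(* If Ra is extremely prime it is a maximal left ideal: for g outside Ra the
   chain of left ideals Ra + Rg^n, all containing a <> 0, stabilizes (in a PID
   such chains correspond to ascending chains of right ideals), and
   Ra + Rg^N = Ra + Rg^(N+1) gives y with (1 - yg) g^N in Ra, whence
   1 - yg in Ra.  Maximality forces Ra to be two-sided, so Ra = cR with c = ea,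
   and cancelling e shows Ra = aR; primality of Ra then yields irreducibility.
   Conversely, if a is irreducible and invariant and bc is in Ra, the left
   ideal {y | yc in Ra} = Rg contains a = ug, so either u is a unit and b is in
   Ra, or g is a unit and c is in Ra. *)

Section Domain.
Variables (R : nzRingType) (hD : is_domain R).

Lemma dom_mulIf (c x y : R) : c <> 0 -> x * c = y * c -> x = y.
Proof.
move=> c_neq0 E; apply/eqP; rewrite -subr_eq0; apply/eqP.
by case: (@hD (x - y) c) => //; rewrite mulrBl E subrr.
Qed.

Lemma dom_mulfI (c x y : R) : c <> 0 -> c * x = c * y -> x = y.
Proof.
move=> c_neq0 E; apply/eqP; rewrite -subr_eq0; apply/eqP.
by case: (@hD c (x - y)) => //; rewrite mulrBr E subrr.
Qed.

Lemma dom_mul_eq1C (x y : R) : x * y = 1 -> y * x = 1.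
Proof.
move=> xy1; have x_neq0 : x <> 0.
  by move=> x0; move: xy1; rewrite x0 mul0r => /esym/eqP; rewrite oner_eq0.
by apply: (dom_mulfI x_neq0); rewrite mulrA xy1 mul1r mulr1.
Qed.

Lemma dom_unit_mull (x y : R) : x * y = 1 -> is_unit x.
Proof. by move=> xy1; exists y; split; last exact: dom_mul_eq1C. Qed.

Lemma dom_unit_mulr (x y : R) : x * y = 1 -> is_unit y.
Proof. by move=> xy1; exists x; split; first exact: dom_mul_eq1C. Qed.

End Domain.

Section Ideals.
Variable R : nzRingType.

Lemma lprincipal_id (a : R) : lprincipal a a.
Proof. by exists 1; rewrite mul1r. Qed.

Lemma rprincipal_id (a : R) : rprincipal a a.
Proof. by exists 1; rewrite mulr1. Qed.

Lemma lprincipal_left_ideal (a : R) : left_ideal (lprincipal a).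
Proof.
split.
- by exists 0; rewrite mul0r.
- by move=> _ _ [r ->] [s ->]; exists (r + s); rewrite mulrDl.
- by move=> r _ [s ->]; exists (r * s); rewrite mulrA.
Qed.

Definition ladd (I : R -> Prop) (g : R) : R -> Prop :=
  fun x => exists y p, I p /\ x = y * g + p.

Lemma left_ideal_ladd (I : R -> Prop) (g : R) : left_ideal I -> left_ideal (ladd I g).
Proof.
case=> I0 ID IM; split.
- by exists 0, 0; rewrite mul0r addr0.
- move=> _ _ [y [p [Ip ->]]] [y' [p' [Ip' ->]]]; exists (y + y'), (p + p').
  by rewrite mulrDl addrACA; split => //; apply: ID.
- move=> r _ [y [p [Ip ->]]]; exists (r * y), (r * p).
  by rewrite mulrDr mulrA; split => //; apply: IM.
Qed.

Definition lcolon (I : R -> Prop) (c : R) : R -> Prop := fun y => I (y * c).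

Lemma left_ideal_lcolon (I : R -> Prop) (c : R) : left_ideal I -> left_ideal (lcolon I c).
Proof.
case=> I0 ID IM; split; rewrite /lcolon.
- by rewrite mul0r.
- by move=> x y Ix Iy; rewrite mulrDl; apply: ID.
- by move=> r x Ix; rewrite -mulrA; apply: IM.
Qed.

Lemma extremely_prime_not1 (p : R -> Prop) : extremely_prime p -> ~ p 1.
Proof. by case=> -[_ _ pM] [x px] _ p1; apply: px; rewrite -[x]mulr1; apply: pM. Qed.

Lemma extremely_prime_expr (p : R -> Prop) (g : R) :
  extremely_prime p -> ~ p g -> forall n, ~ p (g ^+ n).
Proof.
move=> ep g_notin; elim=> [|n IHn]; first by rewrite expr0; exact: extremely_prime_not1.
by rewrite exprSr; case: ep => _ _ ep_mul /ep_mul [].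
Qed.

End Ideals.

Lemma right_ideal_acc (R : nzRingType)
    (hr : forall I : R -> Prop, right_ideal I -> exists a, forall x, I x <-> rprincipal a x)
    (J : nat -> R -> Prop) :
  (forall n, right_ideal (J n)) -> (forall n x, J n x -> J n.+1 x) ->
  exists N, forall x, J N.+1 x -> J N x.
Proof.
move=> J_ideal J_mono.
have J_le m n x : (m <= n)%N -> J m x -> J n x.
  by move/subnK <-; elim: (n - m)%N => // k IHk /IHk; rewrite addSn; exact: J_mono.
pose U x := exists n, J n x.
have U_ideal : right_ideal U.
  split.
  - by exists 0%N; case: (J_ideal 0%N).
  - move=> x y [m Jx] [n Jy]; exists (maxn m n); case: (J_ideal (maxn m n)) => _ JD _.
    by apply: JD; [apply: J_le Jx; exact: leq_maxl | apply: J_le Jy; exact: leq_maxr].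
  - by move=> r x [n Jx]; exists n; case: (J_ideal n) => _ _ JM; exact: JM.
have [g Ug] := hr _ U_ideal.
have [N JNg] : U g by apply/Ug; exact: rprincipal_id.
exists N => x /(ex_intro (fun n => J n x) N.+1) /Ug [r ->].
by case: (J_ideal N) => _ _ JM; exact: JM.
Qed.

Lemma PID_lprincipal_dcc (R : nzRingType) (hR : PID R) (a : R) (b : nat -> R) :
  a <> 0 -> (forall n, lprincipal (b n) a) -> (forall n, lprincipal (b n) (b n.+1)) ->
  exists N, lprincipal (b N.+1) (b N).
Proof.
case: hR => hD _ hr a_neq0 b_a b_S.
have b_neq0 n : b n <> 0.
  by case: (b_a n) => d Ed b0; apply: a_neq0; rewrite Ed b0 mulr0.
have cofactorS n d d' c :
    a = d * b n -> a = d' * b n.+1 -> b n.+1 = c * b n -> d = d' * c.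
  by move=> Ed Ed' Ec; apply: (dom_mulIf hD (b_neq0 n)); rewrite -Ed -mulrA -Ec -Ed'.
(* the cofactor d in a = d * b n is unique, and J n = d R grows as R (b n) shrinks *)
pose J n x := exists d s, a = d * b n /\ x = d * s.
have J_ideal n : right_ideal (J n).
  have [d Ed] := b_a n; split.
  - by exists d, 0; rewrite mulr0.
  - move=> _ _ [d1 [s1 [E1 ->]]] [d2 [s2 [E2 ->]]].
    have -> : d2 = d1 by apply: (dom_mulIf hD (b_neq0 n)); rewrite -E1 -E2.
    by exists d1, (s1 + s2); rewrite mulrDr.
  - by move=> r _ [d1 [s [E1 ->]]]; exists d1, (s * r); rewrite mulrA.
have J_mono n x : J n x -> J n.+1 x.
  case=> d [s [Ed ->]]; have [d' Ed'] := b_a n.+1; have [c Ec] := b_S n.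
  by exists d', (c * s); split => //; rewrite (cofactorS _ _ _ _ Ed Ed' Ec) mulrA.
have [N JN] := right_ideal_acc hr J_ideal J_mono.
have [d' Ed'] := b_a N.+1; have [c Ec] := b_S N.
have [d [e [Ed De]]] : J N d' by apply: JN; exists d', 1; rewrite mulr1.
have d'_neq0 : d' <> 0 by move=> d0; apply: a_neq0; rewrite Ed' d0 mul0r.
have ce1 : c * e = 1.
  apply: (dom_mulfI hD d'_neq0).
  by rewrite mulr1 mulrA -(cofactorS _ _ _ _ Ed Ed' Ec) -De.
by exists N, e; rewrite Ec mulrA (dom_mul_eq1C hD ce1) mul1r.
Qed.

Lemma PID_left_ideal_dcc (R : nzRingType) (hR : PID R) (a : R) (K : nat -> R -> Prop) :
  a <> 0 -> (forall n, left_ideal (K n)) -> (forall n, K n a) ->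
  (forall n x, K n.+1 x -> K n x) -> exists N, forall x, K N x -> K N.+1 x.
Proof.
move=> a_neq0 K_ideal K_a K_desc.
have [b Kb] : exists b : nat -> R, forall n x, K n x <-> lprincipal (b n) x.
  apply: (choice (fun n b => forall x, K n x <-> lprincipal b x)) => n.
  by case: hR => _ hl _; exact: hl.
have b_a n : lprincipal (b n) a by apply/Kb.
have b_S n : lprincipal (b n) (b n.+1) by apply/Kb/K_desc/Kb; exact: lprincipal_id.
have [N [c Ec]] := PID_lprincipal_dcc hR a_neq0 b_a b_S.
by exists N => x /Kb [r ->]; apply/Kb; exists (r * c); rewrite Ec mulrA.
Qed.

Section ExtremelyPrimeInPID.
Variables (R : nzRingType) (hR : PID R) (a : R).
Hypotheses (a_neq0 : a <> 0) (ep : extremely_prime (lprincipal a)).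

Lemma extremely_prime_lprincipal_maximal (g : R) :
  ~ lprincipal a g -> exists y, lprincipal a (1 - y * g).
Proof.
move=> g_notin; pose K n := ladd (lprincipal a) (g ^+ n).
have K_a n : K n a by exists 0, a; rewrite mul0r add0r; split => //; exact: lprincipal_id.
have K_desc n x : K n.+1 x -> K n x.
  by case=> y [p [ap ->]]; exists (y * g), p; rewrite exprS mulrA.
have K_ideal n : left_ideal (K n) by apply/left_ideal_ladd/lprincipal_left_ideal.
have [N KN] := PID_left_ideal_dcc hR a_neq0 K_ideal K_a K_desc.
have [y [p [ap EgN]]] : K N.+1 (g ^+ N).
  by apply: KN; exists 1, 0; rewrite mul1r addr0; split => //; exists 0; rewrite mul0r.
exists y; have [_ _ ep_mul] := ep.
have : lprincipal a ((1 - y * g) * g ^+ N).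
  by rewrite mulrBl mul1r -mulrA -exprS {1}EgN addrAC subrr add0r.
by case/ep_mul => // /(extremely_prime_expr ep g_notin).
Qed.

(* if a r were outside Ra, maximality would give 1 - y a r in Ra, and then
   (1 - r y a) r = r (1 - y a r) would put 1 - r y a, hence 1, in Ra *)
Lemma extremely_prime_lprincipal_mulr (r : R) : lprincipal a (a * r).
Proof.
have [_ _ ep_mul] := ep.
case: (classic (lprincipal a (a * r))) => // ar_notin.
have r_notin : ~ lprincipal a r.
  by case=> s Er; apply: ar_notin; exists (a * s); rewrite Er mulrA.
have [y [q Eq]] := extremely_prime_lprincipal_maximal ar_notin.
have : lprincipal a ((1 - r * y * a) * r).
  exists (r * q); rewrite -[r * q * a]mulrA -Eq.
  by rewrite mulrBr mulr1 mulrBl mul1r !mulrA.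
case/ep_mul => [rya_in | /r_notin []]; exfalso; apply: (extremely_prime_not1 ep).
have [_ addI _] := lprincipal_left_ideal a.
by rewrite -(subrK (r * y * a) 1); apply: addI => //; exists (r * y).
Qed.

Lemma extremely_prime_lprincipal_invariant : invariant_elt a.
Proof.
have [hD _ hr] := hR.
have Ra_right : right_ideal (lprincipal a).
  have [R0 RD _] := lprincipal_left_ideal a; split => // r _ [s ->].
  have [t Et] := extremely_prime_lprincipal_mulr r.
  by exists (s * t); rewrite -mulrA Et mulrA.
have [c Rc] := hr _ Ra_right.
have [e Ec] : lprincipal a c by apply/Rc; exact: rprincipal_id.
have [u Eu] : rprincipal c a by apply/Rc; exact: lprincipal_id.
have e_neq0 : e <> 0 by move=> e0; apply: a_neq0; rewrite Eu Ec e0 !mul0r.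
split => // x; split; last by case=> r ->; exact: extremely_prime_lprincipal_mulr.
case=> r ->; have [v Ev] : rprincipal c (e * (r * a)).
  by apply/Rc; exists (e * r); rewrite mulrA.
by exists v; apply: (dom_mulfI hD e_neq0); rewrite Ev Ec mulrA.
Qed.

End ExtremelyPrimeInPID.

Lemma invariant_extremely_prime_irreducible (R : nzRingType) (a : R) :
  is_domain R -> invariant_elt a -> extremely_prime (lprincipal a) -> irreducible_elt a.
Proof.
move=> hD [a_neq0 inv] ep; have [_ _ ep_mul] := ep; split.
  by case=> b [_ ba1]; apply: (extremely_prime_not1 ep); exists b; rewrite ba1.
move=> b c Ea; have : lprincipal a (b * c) by rewrite -Ea; exact: lprincipal_id.
case/ep_mul => -[w Ew].
- have [w' Ew'] := (inv (w * a)).1 (ex_intro _ w erefl).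
  right; apply: (dom_unit_mulr hD (x := w')); apply: (dom_mulfI hD a_neq0).
  by rewrite mulr1 mulrA -Ew' -Ew.
- left; apply: (dom_unit_mull hD (y := w)); apply: (dom_mulIf hD a_neq0).
  by rewrite mul1r -mulrA -Ew.
Qed.

Lemma irreducible_invariant_extremely_prime (R : nzRingType) (a : R) :
  is_domain R ->
  (forall I : R -> Prop, left_ideal I -> exists g, forall x, I x <-> lprincipal g x) ->
  irreducible_elt a -> invariant_elt a -> extremely_prime (lprincipal a).
Proof.
move=> hD hl [a_nunit a_irr] [a_neq0 inv]; split.
- exact: lprincipal_left_ideal.
- by exists 1; case=> r Er; apply: a_nunit; apply: (dom_unit_mulr hD (x := r)); rewrite -Er.
- move=> b c bc_in.
  have [g Qg] := hl _ (left_ideal_lcolon c (lprincipal_left_ideal a)).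
  have [u Eu] : lprincipal g a by apply/Qg; apply/(inv (a * c)); exists c.
  case: (a_irr u g Eu) => -[v [uv1 vu1]].
  + have [t ->] := (Qg b).1 bc_in; left; exists (t * v).
    by rewrite Eu !mulrA -(mulrA t v u) vu1 mulr1.
  + right; have : lcolon (lprincipal a) c 1 by apply/Qg; exists v; rewrite vu1.
    by rewrite /lcolon mul1r.
Qed.

Theorem proposition3p2 (R : nzRingType) (hR : PID R) (a : R)
    (hRa : ~ (forall x : R, lprincipal a x <-> x = 0)) :
  extremely_prime (lprincipal a) <-> (irreducible_elt a /\ invariant_elt a).
Proof.
have a_neq0 : a <> 0.
  move=> a0; apply: hRa => x; split => [[r ->]|->]; first by rewrite a0 mulr0.
  by exists 0; rewrite mul0r.
have [hD hl _] := hR.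
split => [ep | [a_irr a_inv]]; last exact: irreducible_invariant_extremely_prime.
have a_inv := extremely_prime_lprincipal_invariant hR a_neq0 ep.
by split => //; exact: invariant_extremely_prime_irreducible.
Qed.
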